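(* Let $(\mathbf{x}^*,\boldsymbol{\lambda}^* )$ be a saddle point ($\mathcal{A}(\mathbf{x}^* )=\mathbf{b}$ and $-\mathcal{A}_i^T(\boldsymbol{\lambda}^* )\in\partial f_i(\mathbf{x}_i^* )$ for all $i$), and let the iterates be generated by the Fast PL-ADMM-PS algorithm. Suppose $X$ is a bounded set containing $\mathbf{x}^*$ and all $\mathbf{z}^k$ ($k\ge0$), with diameter $D_X=\sup_{\mathbf{u},\mathbf{v}\in X}\|\mathbf{u}-\mathbf{v}\|$, and $\Lambda$ is a bounded set containing $\boldsymbol{\lambda}^*$ and all $\boldsymbol{\lambda}^k$ ($k\ge0$), with diameter $D_\Lambda$. Let $$\alpha=\min\Bigl\{\frac{1}{n+1},\ \frac{\eta_i-n\|\mathcal{A}_i\|^2}{2(n+1)\|\mathcal{A}_i\|^2}\ (i=1,\dots,n)\Bigr\},\quad L_{\max}=\max_i L_i,\quad \eta_{\max}=\max_i\eta_i.$$ Then for every $K>0$, with $f(\mathbf{x})=\sum_i f_i(\mathbf{x}_i)$, $$f(\mathbf{x}^{K+1})-f(\mathbf{x}^* )+\langle\boldsymbol{\lambda}^*,\mathcal{A}(\mathbf{x}^{K+1})-\mathbf{b}\rangle+\frac{\beta\alpha}{2}\|\mathcal{A}(\mathbf{x}^{K+1})-\mathbf{b}\|^2\le\frac{2L_{\max}\|\mathbf{z}^0-\mathbf{x}^*\|^2}{(K+2)^2}+\frac{2\beta\eta_{\max}D_X^2}{K+2}+\frac{2D_\Lambda^2}{\beta(K+2)}.$$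
   Context: Setting: finite-dimensional real inner product spaces with induced norms $\|\cdot\|$. Problem: $\min\sum_{i=1}^n f_i(\mathbf{x}_i)$, $f_i=g_i+h_i$, subject to $\mathcal{A}(\mathbf{x}):=\sum_{i=1}^n\mathcal{A}_i(\mathbf{x}_i)=\mathbf{b}$, where $\mathbf{x}=(\mathbf{x}_1,\dots,\mathbf{x}_n)$, each $g_i,h_i$ is proper convex lower semicontinuous, $g_i$ is differentiable with $L_i$-Lipschitz gradient ($L_i>0$), each $\mathcal{A}_i$ is a nonzero linear map (adjoint $\mathcal{A}_i^T$, operator norm $\|\mathcal{A}_i\|$) into a common space. Fast PL-ADMM-PS: fix $\beta>0$ and $\eta_i>n\|\mathcal{A}_i\|^2$; given $\mathbf{x}^0,\mathbf{z}^0,\boldsymbol{\lambda}^0$ and $\theta^{(0)}=1$, for $k=0,1,2,\dots$, for each $i=1,\dots,n$ (in parallel): $\mathbf{y}_i^{k+1}=(1-\theta^{(k)})\mathbf{x}_i^k+\theta^{(k)}\mathbf{z}_i^k$; $\mathbf{z}_i^{k+1}=\arg\min_{\mathbf{x}_i}\ \langle\nabla g_i(\mathbf{y}_i^{k+1}),\mathbf{x}_i\rangle+h_i(\mathbf{x}_i)+\langle\boldsymbol{\lambda}^k,\mathcal{A}_i(\mathbf{x}_i)\rangle+\langle\beta\mathcal{A}_i^T(\mathcal{A}(\mathbf{z}^k)-\mathbf{b}),\mathbf{x}_i\rangle+\frac{L_i\theta^{(k)}+\beta\eta_i}{2}\|\mathbf{x}_i-\mathbf{z}_i^k\|^2$;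 $\mathbf{x}_i^{k+1}=(1-\theta^{(k)})\mathbf{x}_i^k+\theta^{(k)}\mathbf{z}_i^{k+1}$; then $\boldsymbol{\lambda}^{k+1}=\boldsymbol{\lambda}^k+\beta(\mathcal{A}(\mathbf{z}^{k+1})-\mathbf{b})$ and $\theta^{(k+1)}=\frac{-(\theta^{(k)})^2+\sqrt{(\theta^{(k)})^4+4(\theta^{(k)})^2}}{2}$. (The paper writes the first term as $2L_{\max}D_{\mathbf{x}^*}^2/(K+2)^2$ with $D_{\mathbf{x}^*}$ the initial distance to $\mathbf{x}^*$, implicitly taking $\mathbf{z}^0=\mathbf{x}^0$.) *)

From Stdlib Require Import Reals.
From mathcomp Require Import all_boot.
Set Implicit Arguments. Unset Strict Implicit. Unset Printing Implicit Defensive.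
Open Scope R_scope.

Definition vec (d : nat) := 'I_d -> R.
Definition vzero d : vec d := fun _ => 0.
Definition vadd d (u v : vec d) : vec d := fun j => u j + v j.
Definition vsub d (u v : vec d) : vec d := fun j => u j - v j.
Definition vscale d (a : R) (u : vec d) : vec d := fun j => a * u j.
Definition dot d (u v : vec d) : R := \big[Rplus/0]_(j < d) (u j * v j).
Definition vnorm d (u : vec d) : R := sqrt (dot u u).

Definition linmap (m p : nat) := 'I_m -> 'I_p -> R.
Definition lapp m p (A : linmap m p) (u : vec p) : vec m :=
  fun r => \big[Rplus/0]_(j < p) (A r j * u j).
Definition ladj m p (A : linmap m p) (w : vec m) : vec p :=
  fun j => \big[Rplus/0]_(r < m) (A r j * w r).
Definition is_opnorm m p (A : linmap m p) (nA : R) : Prop :=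
  is_lub (fun t => exists u : vec p, vnorm u <= 1 /\ t = vnorm (lapp A u)) nA.

Definition bvec (n : nat) (d : 'I_n -> nat) := forall i : 'I_n, vec (d i).
Definition bsub n (d : 'I_n -> nat) (u v : bvec d) : bvec d :=
  fun i => vsub (u i) (v i).
Definition bdot n (d : 'I_n -> nat) (u v : bvec d) : R :=
  \big[Rplus/0]_(i < n) dot (u i) (v i).
Definition bnorm n (d : 'I_n -> nat) (u : bvec d) : R := sqrt (bdot u u).

Definition Aop n (d : 'I_n -> nat) m (A : forall i : 'I_n, linmap m (d i))
  (x : bvec d) : vec m :=
  \big[(@vadd m)/(@vzero m)]_(i < n) lapp (A i) (x i).

Definition is_diam (T : Type) (nrm : T -> T -> R) (S : T -> Prop) (D : R) :=
  is_lub (fun t => exists u v, S u /\ S v /\ t = nrm u v) D.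
Definition bounded_set (T : Type) (nrm : T -> R) (S : T -> Prop) :=
  exists M, forall u, S u -> nrm u <= M.

Inductive ereal := Fin (r : R) | PInf.
Definition eadd (a b : ereal) : ereal :=
  match a, b with Fin x, Fin y => Fin (x + y) | _, _ => PInf end.
Definition ele (a b : ereal) : Prop :=
  match a, b with
  | Fin x, Fin y => x <= y
  | _, PInf => True
  | PInf, Fin _ => False
  end.
Definition real_of (a : ereal) : R := match a with Fin x => x | PInf => 0 end.

Definition proper_e d (h : vec d -> ereal) := exists u, h u <> PInf.
Definition convex_e d (h : vec d -> ereal) :=
  forall u v t a c, 0 <= t <= 1 -> h u = Fin a -> h v = Fin c ->
    ele (h (vadd (vscale t u) (vscale (1 - t) v))) (Fin (t * a + (1 - t) * c)).
Definition vconv d (u : nat -> vec d) (l : vec d) :=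
  forall eps, eps > 0 -> exists N, forall k, (N <= k)%nat -> vnorm (vsub (u k) l) < eps.
Definition closed_set d (S : vec d -> Prop) :=
  forall (u : nat -> vec d) l, (forall k, S (u k)) -> vconv u l -> S l.
Definition lsc_e d (h : vec d -> ereal) :=
  forall alpha, closed_set (fun u => ele (h u) (Fin alpha)).

Definition convex_r d (g : vec d -> R) :=
  forall u v t, 0 <= t <= 1 ->
    g (vadd (vscale t u) (vscale (1 - t) v)) <= t * g u + (1 - t) * g v.
Definition is_gradient d (g : vec d -> R) (G : vec d -> vec d) :=
  forall u eps, eps > 0 -> exists delta, delta > 0 /\
    forall v, vnorm (vsub v u) < delta ->
      Rabs (g v - g u - dot (G u) (vsub v u)) <= eps * vnorm (vsub v u).
Definition lipschitz_grad d (G : vec d -> vec d) (L : R) :=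
  forall u v, vnorm (vsub (G u) (G v)) <= L * vnorm (vsub u v).

Definition subgrad d (F : vec d -> ereal) (u w : vec d) :=
  exists a, F u = Fin a /\ forall v, ele (Fin (a + dot w (vsub v u))) (F v).

Definition fi d (g : vec d -> R) (h : vec d -> ereal) (u : vec d) : ereal :=
  eadd (Fin (g u)) (h u).
Definition ftot n (d : 'I_n -> nat) (g : forall i, vec (d i) -> R)
  (h : forall i, vec (d i) -> ereal) (x : bvec d) : ereal :=
  \big[eadd/Fin 0]_(i < n) fi (g i) (h i) (x i).

(* objective of the z_i-subproblem at iteration k *)
Definition zobj d m (Gy : vec d) (h : vec d -> ereal) (lam : vec m)
  (Ai : linmap m d) (beta : R) (resid : vec m) (coef : R) (zk : vec d)
  (u : vec d) : ereal :=
  eadd (h u) (Fin (dot Gy u + dot lam (lapp Ai u) + dot (vscale beta (ladj Ai resid)) u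
                   + coef / 2 * (vnorm (vsub u zk)) ^ 2)).

(* Each block update is a linearized proximal step.  The descent lemma for [g_i] at [y],
   the gradient inequality at [y] and the three-point property of the proximal
   [z]-update bound [f_i (x_i^{k+1})] by the convex combination of [f_i (x_i^k)] and
   [f_i (x_i^* )] plus telescoping distance terms.  Summing over the blocks and using the
   multiplier update, the gap
     Psi_k = f(x^k) - f(x^* ) + <lam^*, A x^k - b> + beta alpha / 2 |A x^k - b|^2
   satisfies
     Psi_{k+1} <= (1 - theta_k) Psi_k + theta_k^2 (P_k - P_{k+1}) + theta_k (Q_k - Q_{k+1}),
   where the error of the parallel (Jacobi) update, controlled through
   |sum_i A_i (z_i^{k+1} - z_i^k)|^2 <= n sum_i |A_i|^2 |z_i^{k+1} - z_i^k|^2, is absorbed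
   thanks to the choice of [alpha].  Since (1 - theta_{k+1}) / theta_{k+1}^2 = 1 / theta_k^2
   the recursion telescopes; theta_K <= 2 / (K + 2) gives the rate and the diameters of
   [X] and [Lam] bound [Q]. *)

From Stdlib Require Import Reals Lra Psatz FunctionalExtensionality.
From HB Require Import structures.
From mathcomp Require Import all_boot.
Set Implicit Arguments. Unset Strict Implicit.
Open Scope R_scope.

(** * Finite sums and real arithmetic *)

HB.instance Definition _ := Monoid.isComLaw.Build R 0 Rplus
  (fun a b c => esym (Rplus_assoc a b c)) Rplus_comm Rplus_0_l.
HB.instance Definition _ := Monoid.isMulLaw.Build R 0 Rmult Rmult_0_l Rmult_0_r.
HB.instance Definition _ :=
  Monoid.isAddLaw.Build R Rmult Rplus Rmult_plus_distr_r Rmult_plus_distr_l.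

Lemma sumRD (I : finType) (F H : I -> R) :
  \big[Rplus/0]_(j : I) F j + \big[Rplus/0]_(j : I) H j = \big[Rplus/0]_(j : I) (F j + H j).
Proof. by rewrite big_split. Qed.

Lemma sumR_mull (I : finType) c (F : I -> R) :
  c * \big[Rplus/0]_(j : I) F j = \big[Rplus/0]_(j : I) (c * F j).
Proof. by rewrite big_distrr. Qed.

Lemma sumR_mulr (I : finType) c (F : I -> R) :
  \big[Rplus/0]_(j : I) F j * c = \big[Rplus/0]_(j : I) (F j * c).
Proof. by rewrite big_distrl. Qed.

Lemma sumRN (I : finType) (F : I -> R) :
  - (\big[Rplus/0]_(j : I) F j) = \big[Rplus/0]_(j : I) (- F j).
Proof. exact: (big_morph Ropp Ropp_plus_distr Ropp_0). Qed.

Lemma ler_sum (I : finType) (F H : I -> R) :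
  (forall j, F j <= H j) -> \big[Rplus/0]_(j : I) F j <= \big[Rplus/0]_(j : I) H j.
Proof. by move=> FH; apply: (big_ind2 Rle) => //; [lra | move=> *; lra]. Qed.

Lemma sumR_ge0 (I : finType) (F : I -> R) :
  (forall j, 0 <= F j) -> 0 <= \big[Rplus/0]_(j : I) F j.
Proof. by move=> F0; apply: (big_ind (Rle 0)) => //; [lra | move=> *; lra]. Qed.

Lemma sumR_const n (c : R) : \big[Rplus/0]_(i < n) c = INR n * c.
Proof. by elim: n => [|n IH]; rewrite ?big_ord0 ?big_ord_recr ?IH ?S_INR /=; ring. Qed.

Ltac sum_normalize :=
  rewrite /Rminus; repeat rewrite ?sumR_mull ?sumR_mulr ?sumRN ?sumRD.

Ltac vec_ring := rewrite /dot /vadd /vsub /vscale; sum_normalize;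
  apply: eq_bigr => ? _; ring.

Ltac vec_ext := apply: functional_extensionality => ?; rewrite /vadd /vsub /vscale; ring.

Lemma bigmin_le_init n (x0 : R) (F : 'I_n -> R) :
  \big[Rmin/x0]_(i < n) F i <= x0.
Proof.
rewrite unlock /reducebig.
by elim: (index_enum _) => [|a s IH] /=; [lra | apply: Rle_trans (Rmin_r _ _) IH].
Qed.

Lemma bigmin_le n (x0 : R) (F : 'I_n -> R) (i0 : 'I_n) :
  \big[Rmin/x0]_(i < n) F i <= F i0.
Proof.
rewrite unlock /reducebig; move: (mem_index_enum i0).
elim: (index_enum _) => [//|a s IH] /=; rewrite in_cons => /orP [/eqP <-|s_i0].
  exact: Rmin_l.
exact: Rle_trans (Rmin_r _ _) (IH s_i0).
Qed.

Lemma bigmax_ge_init n (x0 : R) (F : 'I_n -> R) :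
  x0 <= \big[Rmax/x0]_(i < n) F i.
Proof.
rewrite unlock /reducebig.
by elim: (index_enum _) => [|a s IH] /=; [lra | apply: Rle_trans IH (Rmax_r _ _)].
Qed.

Lemma bigmax_ge n (x0 : R) (F : 'I_n -> R) (i0 : 'I_n) :
  F i0 <= \big[Rmax/x0]_(i < n) F i.
Proof.
rewrite unlock /reducebig; move: (mem_index_enum i0).
elim: (index_enum _) => [//|a s IH] /=; rewrite in_cons => /orP [/eqP <-|s_i0].
  exact: Rmax_l.
exact: Rle_trans (IH s_i0) (Rmax_r _ _).
Qed.

Lemma Rmult_le_of_le_div a b c : a <= b / c -> 0 < c -> a * c <= b.
Proof.
move=> le_ab c0; have := Rmult_le_compat_r c _ _ (Rlt_le _ _ c0) le_ab.
by rewrite /Rdiv Rmult_assoc Rinv_l; lra.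
Qed.

Lemma Rmult_lt_of_lt_div a b c : a < b / c -> 0 < c -> a * c < b.
Proof.
move=> lt_ab c0; have := Rmult_lt_compat_r c _ _ c0 lt_ab.
by rewrite /Rdiv Rmult_assoc Rinv_l; lra.
Qed.

Lemma Rle_div_of_mul_le a b c : a * c <= b -> 0 < c -> a <= b / c.
Proof.
move=> le_ab c0; apply: (Rmult_le_reg_r c) => //.
by rewrite /Rdiv Rmult_assoc Rinv_l; lra.
Qed.

Lemma Rinv_ge0 r : 0 <= r -> 0 <= / r.
Proof. by case/Rle_lt_or_eq => [/Rinv_0_lt_compat/Rlt_le // | <-]; rewrite Rinv_0; lra. Qed.

(** * Inner products and linear maps *)

Section Vectors.
Variable k : nat.
Implicit Types u v w : vec k.

Lemma dot_ge0 u : 0 <= dot u u.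
Proof. by apply: sumR_ge0 => j; nra. Qed.

Lemma vnorm_ge0 u : 0 <= vnorm u.
Proof. exact: sqrt_pos. Qed.

Lemma vnorm_sq u : vnorm u ^ 2 = dot u u.
Proof. by rewrite /vnorm pow2_sqrt //; apply: dot_ge0. Qed.

Lemma dot_vscaler u v t : dot u (vscale t v) = t * dot u v.
Proof. by vec_ring. Qed.

Lemma dot_vsubl u v w : dot (vsub u v) w = dot u w - dot v w.
Proof. by vec_ring. Qed.

Lemma vnorm_scale t u : vnorm (vscale t u) = Rabs t * vnorm u.
Proof.
rewrite /vnorm.
have -> : dot (vscale t u) (vscale t u) = t ^ 2 * dot u u by vec_ring.
rewrite sqrt_mult_alt; last by have := pow2_ge_0 t; lra.
by rewrite -sqrt_Rsqr_abs /Rsqr /= Rmult_1_r.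
Qed.

Lemma cauchy_schwarz_sq u v : dot u v ^ 2 <= dot u u * dot v v.
Proof.
have quad t : 0 <= dot u u - 2 * t * dot u v + t ^ 2 * dot v v.
  have -> : dot u u - 2 * t * dot u v + t ^ 2 * dot v v =
            dot (vsub u (vscale t v)) (vsub u (vscale t v)) by vec_ring.
  exact: dot_ge0.
have uu0 := dot_ge0 u; have vv0 := dot_ge0 v.
have [vv_eq0 | vv_gt0] : dot v v = 0 \/ 0 < dot v v by lra.
  (* a linear function of t bounded below must be constant *)
  have := quad ((dot u u + 1) / (2 * dot u v)); have := quad 0.
  rewrite vv_eq0; case: (Req_dec (dot u v) 0) => [-> | uv_neq0]; first nra.
  move=> _; have -> : dot u u - 2 * ((dot u u + 1) / (2 * dot u v)) * dot u v
      + ((dot u u + 1) / (2 * dot u v)) ^ 2 * 0 = -1 by field.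
  lra.
have := quad (dot u v / dot v v).
have -> : dot u u - 2 * (dot u v / dot v v) * dot u v + (dot u v / dot v v) ^ 2 * dot v v
        = (dot u u * dot v v - dot u v ^ 2) / dot v v by field; lra.
move=> q0; have := Rmult_le_pos _ _ q0 (Rlt_le _ _ vv_gt0).
by rewrite /Rdiv Rmult_assoc Rinv_l; lra.
Qed.

Lemma cauchy_schwarz u v : dot u v <= vnorm u * vnorm v.
Proof.
have := cauchy_schwarz_sq u v; rewrite -!vnorm_sq.
have := vnorm_ge0 u; have := vnorm_ge0 v.
set a := vnorm u; set c := vnorm v; set p := dot u v => c0 a0 sq.
have ac0 : 0 <= a * c by nra.
apply: Rnot_lt_le => lt; have := Rmult_le_0_lt_compat _ _ _ _ ac0 ac0 lt lt.
rewrite /= in sq; nra.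
Qed.

Lemma young_dot w r c S : dot w w <= c * S -> 0 <= c -> 0 <= S ->
  2 * dot w r <= S + c * dot r r.
Proof.
move=> ww c0 S0; have := cauchy_schwarz_sq w r; have := dot_ge0 r.
set a := dot w r; set rr := dot r r => rr0 cs.
(* [(S + c rr)^2 >= 4 c S rr >= 4 dot w w rr >= 4 a^2] *)
apply: Rnot_lt_le => lt.
have sum0 : 0 <= S + c * rr by nra.
have := Rmult_le_0_lt_compat _ _ _ _ sum0 sum0 lt lt.
have : dot w w * rr <= c * S * rr by nra.
have := pow2_ge_0 (S - c * rr).
rewrite /= in cs; nra.
Qed.

Lemma dot_comb_le u v t : 0 <= t <= 1 ->
  dot (vadd (vscale (1 - t) u) (vscale t v)) (vadd (vscale (1 - t) u) (vscale t v))
  <= (1 - t) * dot u u + t * dot v v.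
Proof.
move=> t_range.
have diff : (1 - t) * dot u u + t * dot v v -
    dot (vadd (vscale (1 - t) u) (vscale t v)) (vadd (vscale (1 - t) u) (vscale t v)) =
    t * (1 - t) * dot (vsub u v) (vsub u v) by vec_ring.
have : 0 <= t * (1 - t) by apply: Rmult_le_pos; lra.
by move/Rmult_le_pos/(_ (dot_ge0 (vsub u v))); lra.
Qed.

End Vectors.

Section LinearMaps.
Variables (m p : nat) (A : linmap m p).

Lemma dot_lapp (w : vec m) (u : vec p) : dot w (lapp A u) = dot (ladj A w) u.
Proof.
rewrite /dot /lapp /ladj.
under eq_bigr => r _ do rewrite sumR_mull.
under [RHS]eq_bigr => j _ do rewrite sumR_mulr.
by rewrite exchange_big; apply: eq_bigr => j _; apply: eq_bigr => r _; ring.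
Qed.

Lemma lapp_comb (u v : vec p) a c :
  lapp A (vadd (vscale a u) (vscale c v)) = vadd (vscale a (lapp A u)) (vscale c (lapp A v)).
Proof. apply: functional_extensionality => r; rewrite /lapp; vec_ring. Qed.

Lemma lapp_vscale c (u : vec p) : lapp A (vscale c u) = vscale c (lapp A u).
Proof. apply: functional_extensionality => r; rewrite /lapp; vec_ring. Qed.

Lemma lapp_vsub (u v : vec p) : lapp A (vsub u v) = vsub (lapp A u) (lapp A v).
Proof. apply: functional_extensionality => r; rewrite /lapp; vec_ring. Qed.

Variable nA : R.
Hypothesis A_opnorm : is_opnorm A nA.

Lemma opnorm_ge0 : 0 <= nA.
Proof.
case: A_opnorm => ub _; apply: Rle_trans (vnorm_ge0 (lapp A (@vzero p))) _.
apply: ub; exists (@vzero p); split => //.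
rewrite /vnorm /dot /vzero (eq_bigr (fun _ => 0)) => [|j _]; last ring.
by rewrite sumR_const Rmult_0_r sqrt_0; lra.
Qed.

Lemma vnorm_lapp_le (u : vec p) : vnorm (lapp A u) <= nA * vnorm u.
Proof.
have nA0 := opnorm_ge0; case: A_opnorm => ub _.
have u0 := vnorm_ge0 u; have Au0 := vnorm_ge0 (lapp A u).
have scaled t : 0 <= t -> t * vnorm u <= 1 -> t * vnorm (lapp A u) <= nA.
  move=> t0 tu; apply: ub; exists (vscale t u).
  by rewrite lapp_vscale !vnorm_scale Rabs_right; [split | lra].
have [u_eq0 | u_gt0] : vnorm u = 0 \/ 0 < vnorm u by lra.
  (* then every multiple of [u] is in the unit ball, so [A u] must vanish *)
  rewrite u_eq0 Rmult_0_r; apply: Rnot_lt_le => Au_gt0.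
  set t := (nA + 1) / vnorm (lapp A u).
  have t0 : 0 <= t by apply: Rmult_le_pos; [lra | apply/Rlt_le/Rinv_0_lt_compat].
  have := scaled t t0; rewrite u_eq0 Rmult_0_r => /(_ ltac:(lra)).
  by rewrite /t /Rdiv Rmult_assoc Rinv_l; lra.
have := scaled (/ vnorm u) (Rlt_le _ _ (Rinv_0_lt_compat _ u_gt0)).
rewrite Rinv_l; last lra.
move=> /(_ (Rle_refl _)) bound.
have := Rmult_le_compat_l _ _ _ u0 bound.
by rewrite -Rmult_assoc Rinv_r; lra.
Qed.

End LinearMaps.

Lemma sqr_sum_le n (a : 'I_n -> R) :
  (\big[Rplus/0]_(i < n) a i) ^ 2 <= INR n * \big[Rplus/0]_(i < n) (a i ^ 2).
Proof.
have := cauchy_schwarz_sq (a : vec n) (fun _ => 1).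
have -> : dot (a : vec n) (fun _ => 1) = \big[Rplus/0]_(i < n) a i.
  by apply: eq_bigr => i _; ring.
have -> : dot (a : vec n) a = \big[Rplus/0]_(i < n) (a i ^ 2).
  by apply: eq_bigr => i _; ring.
have -> : dot (fun _ : 'I_n => 1) (fun _ => 1) = INR n.
  by rewrite /dot (eq_bigr (fun _ => 1)) ?sumR_const => [|i _]; ring.
lra.
Qed.

Section BlockOperator.
Variables (n : nat) (d : 'I_n -> nat) (m : nat) (A : forall i : 'I_n, linmap m (d i)).
Arguments A : clear implicits.

Lemma Aop_coord (x : bvec d) r : Aop A x r = \big[Rplus/0]_(i < n) lapp (A i) (x i) r.
Proof. by rewrite /Aop; apply: (big_morph (fun v : vec m => v r) (id1 := 0) (op1 := Rplus)). Qed.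

Lemma Aop_bsub (u v : bvec d) : Aop A (bsub u v) = vsub (Aop A u) (Aop A v).
Proof.
apply: functional_extensionality => r; rewrite /vsub !Aop_coord /bsub; sum_normalize.
by apply: eq_bigr => i _; rewrite lapp_vsub.
Qed.

Lemma Aop_comb (u v w : bvec d) a c :
  (forall i, w i = vadd (vscale a (u i)) (vscale c (v i))) ->
  Aop A w = vadd (vscale a (Aop A u)) (vscale c (Aop A v)).
Proof.
move=> w_def; apply: functional_extensionality => r.
rewrite /vadd /vscale !Aop_coord; sum_normalize.
by apply: eq_bigr => i _; rewrite w_def lapp_comb.
Qed.

Lemma dot_Aop (l : vec m) (w : bvec d) :
  dot l (Aop A w) = \big[Rplus/0]_(i < n) dot l (lapp (A i) (w i)).
Proof.
rewrite /dot; under eq_bigr => r _ do rewrite Aop_coord sumR_mull.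
exact: exchange_big.
Qed.

Lemma dot_Aop_le (nA : 'I_n -> R) (w : bvec d) :
  (forall i, is_opnorm (A i) (nA i)) ->
  dot (Aop A w) (Aop A w) <=
  \big[Rplus/0]_(i < n) (INR n * nA i ^ 2 * dot (w i) (w i)).
Proof.
move=> A_opnorm.
apply: (Rle_trans _ (INR n * \big[Rplus/0]_(i < n) dot (lapp (A i) (w i)) (lapp (A i) (w i)))).
  rewrite /dot exchange_big sumR_mull; apply: ler_sum => r.
  have sq (t : R) : t * t = t ^ 2 by ring.
  rewrite Aop_coord sq; under eq_bigr => i _ do rewrite sq.
  exact: sqr_sum_le.
rewrite sumR_mull; apply: ler_sum => i.
rewrite -!vnorm_sq Rmult_assoc -Rpow_mult_distr.
apply: Rmult_le_compat_l; first exact: pos_INR.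
apply: pow_incr; split; [exact: vnorm_ge0 | exact: vnorm_lapp_le].
Qed.

End BlockOperator.

(** * Convex functions with a Lipschitz gradient *)

Section SmoothConvex.
Variables (k : nat) (g : vec k -> R) (G : vec k -> vec k).
Hypothesis g_grad : is_gradient g G.

Lemma gradient_ineq : convex_r g -> forall y u, g y + dot (G y) (vsub u y) <= g u.
Proof.
move=> g_conv y u; set w := vsub u y; set N := vnorm w; have N0 : 0 <= N := vnorm_ge0 w.
apply: Rle_plus_epsilon => eps eps0.
have e0 : eps / (N + 1) > 0 by apply: Rdiv_lt_0_compat; lra.
have [delta [delta0 near]] := g_grad y e0.
set t := Rmin 1 (delta / (N + 1)).
have t0 : 0 < t by apply: Rmin_pos; [lra | apply: Rdiv_lt_0_compat; lra].
have t1 : t <= 1 := Rmin_l _ _.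
have tN : t * N < delta.
  have := Rmult_le_of_le_div (Rmin_r 1 (delta / (N + 1))) ltac:(lra); rewrite -/t; nra.
set v := vadd (vscale t u) (vscale (1 - t) y).
have v_y : vsub v y = vscale t w by rewrite /v /w; vec_ext.
have := near v; rewrite v_y vnorm_scale Rabs_right -/N; last lra.
move=> /(_ tN); rewrite dot_vscaler => approx.
have := Rle_abs (- (g v - g y - t * dot (G y) w)); rewrite Rabs_Ropp.
have := g_conv u y t (conj (Rlt_le _ _ t0) t1); rewrite -/v => conv.
(* dividing [t * dot (G y) w <= t * (g u - g y) + t * eps * N / (N + 1)] by [t] *)
have : eps / (N + 1) * (N + 1) = eps by field; lra.
nra.
Qed.

Lemma directional_derivative y w t :
  derivable_pt_lim (fun s => g (vadd y (vscale s w))) t (dot (G (vadd y (vscale t w))) w).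
Proof.
move=> eps eps0; set N := vnorm w; have N0 : 0 <= N := vnorm_ge0 w.
set u := vadd y (vscale t w).
have e0 : eps / (2 * (N + 1)) > 0 by apply: Rdiv_lt_0_compat; lra.
have [delta [delta0 near]] := g_grad u e0.
have r0 : 0 < delta / (N + 1) by apply: Rdiv_lt_0_compat; lra.
exists (mkposreal _ r0) => s s_neq0 /= s_small.
have step : vsub (vadd y (vscale (t + s) w)) u = vscale s w by rewrite /u; vec_ext.
have s_pos : 0 < Rabs s := Rabs_pos_lt _ s_neq0.
have sN : Rabs s * N < delta.
  have := Rmult_lt_of_lt_div s_small ltac:(lra); nra.
have := near (vadd y (vscale (t + s) w)).
rewrite step vnorm_scale dot_vscaler -/N => /(_ sN) approx.
have -> : (g (vadd y (vscale (t + s) w)) - g u) / s - dot (G u) w =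
          (g (vadd y (vscale (t + s) w)) - g u - s * dot (G u) w) / s by field.
rewrite /Rdiv Rabs_mult Rabs_inv.
apply: (Rmult_lt_reg_r (Rabs s)) => //.
rewrite Rmult_assoc Rinv_l ?Rmult_1_r; last lra.
apply: Rle_lt_trans approx _.
have : eps / (2 * (N + 1)) * (2 * (N + 1)) = eps by field; lra.
nra.
Qed.

Lemma descent_lemma (Lg : R) : lipschitz_grad G Lg -> forall y x,
  g x <= g y + dot (G y) (vsub x y) + Lg / 2 * dot (vsub x y) (vsub x y).
Proof.
move=> G_lip y x; set w := vsub x y.
set c1 := dot (G y) w; set c2 := Lg / 2 * dot w w.
set phi := fun s => g (vadd y (vscale s w)).
set psi := (phi - (mult_real_fct c1 id + mult_real_fct c2 (fun s => s ^ 2)))%F.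
have psi' c : 0 <= c <= 1 -> derivable_pt_lim psi c
   (dot (G (vadd y (vscale c w))) w - (c1 * 1 + c2 * (INR 2 * c ^ Init.Nat.pred 2))).
  move=> _; apply: derivable_pt_lim_minus; first exact: directional_derivative.
  apply: derivable_pt_lim_plus; apply: derivable_pt_lim_scal.
    exact: derivable_pt_lim_id.
  exact: derivable_pt_lim_pow.
have [c [mvt [c0 c1']]] := MVT_cor2 _ _ 0 1 Rlt_0_1 psi'.
have end1 : vadd y (vscale 1 w) = x by rewrite /w; vec_ext.
have end0 : vadd y (vscale 0 w) = y by vec_ext.
move: mvt; rewrite /psi /minus_fct /plus_fct /mult_real_fct /id /phi end1 end0 /=.
(* the slope of [psi] is nonpositive because the gradient is [Lg]-Lipschitz *)
have slope : dot (vsub (G (vadd y (vscale c w))) (G y)) w <= Lg * c * dot w w.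
  have := G_lip (vadd y (vscale c w)) y.
  have -> : vsub (vadd y (vscale c w)) y = vscale c w by vec_ext.
  rewrite vnorm_scale Rabs_right; last lra.
  have := cauchy_schwarz (vsub (G (vadd y (vscale c w))) (G y)) w.
  have := vnorm_ge0 w; rewrite -(vnorm_sq w); nra.
rewrite dot_vsubl -/c1 in slope; rewrite /c2; nra.
Qed.

End SmoothConvex.

(** * The linearized proximal step *)

Lemma ge0_of_small_steps (a c : R) : 0 <= c ->
  (forall t, 0 < t <= 1 -> 0 <= t * a + t ^ 2 * c) -> 0 <= a.
Proof.
move=> c0 steps; apply: Rnot_lt_le => a_lt0.
set t := Rmin 1 (- a / (2 * (c + 1))).
have t0 : 0 < t by apply: Rmin_pos; [lra | apply: Rdiv_lt_0_compat; lra].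
have := Rmult_le_of_le_div (Rmin_r 1 (- a / (2 * (c + 1)))) ltac:(lra); rewrite -/t => tc.
have := steps t (conj t0 (Rmin_l _ _)); nra.
Qed.

Definition prox_obj p (h : vec p -> ereal) (ell : vec p -> R) (c : R) (zk u : vec p) :=
  eadd (h u) (Fin (ell u + c / 2 * dot (vsub u zk) (vsub u zk))).

Section ProxStep.
Variables (p : nat) (h : vec p -> ereal) (ell : vec p -> R) (c : R) (zk z1 : vec p).
Hypothesis z1_min : forall u, ele (prox_obj h ell c zk z1) (prox_obj h ell c zk u).

Lemma prox_min_finite : proper_e h -> exists hz, h z1 = Fin hz.
Proof.
move=> [u0 u0_fin]; have := z1_min u0; rewrite /prox_obj.
by case: (h u0) u0_fin => [a|] // _; case: (h z1) => [hz|] // _; exists hz.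
Qed.

(* The strong convexity of the proximal term adds [c/2 |u - z1|^2] to minimality. *)
Lemma prox_three_point :
  convex_e h -> 0 <= c ->
  (forall u v t, ell (vadd (vscale t u) (vscale (1 - t) v)) = t * ell u + (1 - t) * ell v) ->
  forall u hz hu, h z1 = Fin hz -> h u = Fin hu ->
  hz + ell z1 + c / 2 * dot (vsub z1 zk) (vsub z1 zk) + c / 2 * dot (vsub u z1) (vsub u z1)
  <= hu + ell u + c / 2 * dot (vsub u zk) (vsub u zk).
Proof.
move=> h_conv c0 ell_affine u hz hu hz_def hu_def.
set N1 := dot (vsub z1 zk) (vsub z1 zk); set N3 := dot (vsub u z1) (vsub u z1).
set M := dot (vsub z1 zk) (vsub u z1).
have -> : dot (vsub u zk) (vsub u zk) = N1 + 2 * M + N3 by rewrite /N1 /M /N3; vec_ring.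
have N3_0 : 0 <= N3 := dot_ge0 _.
suff : 0 <= hu - hz + ell u - ell z1 + c * M by lra.
apply: (ge0_of_small_steps (c := c / 2 * N3)); first nra.
(* compare [z1] with the point [w] a fraction [t] of the way towards [u] *)
move=> t t_range; set w := vadd (vscale t u) (vscale (1 - t) z1).
have hw_le := h_conv u z1 t hu hz ltac:(lra) hu_def hz_def; rewrite -/w in hw_le.
have := z1_min w; rewrite /prox_obj hz_def.
have -> : dot (vsub w zk) (vsub w zk) = N1 + 2 * t * M + t ^ 2 * N3.
  by rewrite /w /N1 /M /N3; vec_ring.
rewrite /w ell_affine -/w -/N1.
by case: (h w) hw_le => [hw|] //= hw_le min; nra.
Qed.

End ProxStep.

Definition zlin p m (Gy : vec p) (lam : vec m) (Ai : linmap m p) (beta : R)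
  (resid : vec m) (u : vec p) : R :=
  dot Gy u + dot lam (lapp Ai u) + dot (vscale beta (ladj Ai resid)) u.

Lemma zobj_prox p m (Gy : vec p) h (lam : vec m) Ai beta resid coef zk u :
  zobj Gy h lam Ai beta resid coef zk u = prox_obj h (zlin Gy lam Ai beta resid) coef zk u.
Proof. by rewrite /zobj /prox_obj vnorm_sq. Qed.

Lemma zlin_affine p m (Gy : vec p) (lam : vec m) Ai beta resid (u v : vec p) t :
  zlin Gy lam Ai beta resid (vadd (vscale t u) (vscale (1 - t) v)) =
  t * zlin Gy lam Ai beta resid u + (1 - t) * zlin Gy lam Ai beta resid v.
Proof. by rewrite /zlin !dot_lapp; vec_ring. Qed.

Lemma zlin_sub p m (Gy : vec p) (lam : vec m) Ai beta resid (u v : vec p) :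
  zlin Gy lam Ai beta resid u - zlin Gy lam Ai beta resid v - dot Gy (vsub u v) =
  dot (vadd lam (vscale beta resid)) (lapp Ai (vsub u v)).
Proof.
rewrite /zlin !dot_lapp.
have -> : ladj Ai (vadd lam (vscale beta resid)) = vadd (ladj Ai lam) (vscale beta (ladj Ai resid)).
  by apply: functional_extensionality => j; rewrite /ladj; vec_ring.
by vec_ring.
Qed.

Lemma convex_e_step p (h : vec p -> ereal) (th : R) (xk z1 x1 : vec p) hz :
  convex_e h -> 0 < th <= 1 -> (th < 1 -> exists a, h xk = Fin a) -> h z1 = Fin hz ->
  x1 = vadd (vscale (1 - th) xk) (vscale th z1) ->
  (exists a, h x1 = Fin a) /\ real_of (h x1) <= (1 - th) * real_of (h xk) + th * hz.
Proof.
move=> h_conv th_range xk_fin hz_def x1_def.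
have [th_eq1 | th_lt1] : th = 1 \/ th < 1 by lra.
  have -> : x1 = z1 by rewrite x1_def th_eq1; vec_ext.
  by rewrite hz_def th_eq1; split; [exists hz | simpl; lra].
have [hk hk_def] := xk_fin th_lt1.
have := h_conv xk z1 (1 - th) hk hz ltac:(lra) hk_def hz_def.
have -> : vadd (vscale (1 - th) xk) (vscale (1 - (1 - th)) z1) = x1 by rewrite x1_def; vec_ext.
by rewrite hk_def; case: (h x1) => [a|] //= ?; split; [exists a | lra].
Qed.

Section BlockStep.
Variables (p m : nat) (g : vec p -> R) (G : vec p -> vec p) (h : vec p -> ereal).
Variables (Lg : R) (Ai : linmap m p) (beta eta th : R) (lam resid : vec m).
Variables (xk zk z1 y x1 xs : vec p) (hs : R).
Hypotheses (g_conv : convex_r g) (g_grad : is_gradient g G) (G_lip : lipschitz_grad G Lg).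
Hypotheses (h_proper : proper_e h) (h_conv : convex_e h).
Hypotheses (th_range : 0 < th <= 1) (Lg0 : 0 <= Lg) (beta_eta0 : 0 <= beta * eta).
Hypotheses (xk_fin : th < 1 -> exists a, h xk = Fin a) (hs_def : h xs = Fin hs).
Hypotheses (y_def : y = vadd (vscale (1 - th) xk) (vscale th zk))
  (x1_def : x1 = vadd (vscale (1 - th) xk) (vscale th z1)).
Hypothesis z1_min : forall u,
  ele (zobj (G y) h lam Ai beta resid (Lg * th + beta * eta) zk z1)
      (zobj (G y) h lam Ai beta resid (Lg * th + beta * eta) zk u).

Lemma block_descent :
  (exists a, h x1 = Fin a) /\
  g x1 + real_of (h x1) <=
    (1 - th) * (g xk + real_of (h xk)) + th * (g xs + hs)
    - th * dot (vadd lam (vscale beta resid)) (lapp Ai (vsub z1 xs))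
    + th * (Lg * th + beta * eta) / 2 *
        (dot (vsub xs zk) (vsub xs zk) - dot (vsub xs z1) (vsub xs z1))
    - th * (beta * eta) / 2 * dot (vsub z1 zk) (vsub z1 zk).
Proof.
set ell := zlin (G y) lam Ai beta resid; set c := Lg * th + beta * eta.
have prox_min u : ele (prox_obj h ell c zk z1) (prox_obj h ell c zk u).
  by rewrite -!zobj_prox; apply: z1_min.
have [hz hz_def] := prox_min_finite prox_min h_proper.
have c0 : 0 <= c by rewrite /c; nra.
have three_point :=
  prox_three_point prox_min h_conv c0 (@zlin_affine _ _ _ _ _ _ _) hz_def hs_def.
have [x1_fin h_step] := convex_e_step h_conv th_range xk_fin hz_def x1_def.
split => //.
have g_step : g x1 <= (1 - th) * g xk + th * g xs + th * dot (G y) (vsub z1 xs)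
                    + Lg * th ^ 2 / 2 * dot (vsub z1 zk) (vsub z1 zk).
  have := descent_lemma g_grad G_lip y x1.
  have -> : vsub x1 y = vscale th (vsub z1 zk) by rewrite x1_def y_def; vec_ext.
  have -> : dot (G y) (vscale th (vsub z1 zk)) = (1 - th) * dot (G y) (vsub xk y)
      + th * dot (G y) (vsub z1 xs) + th * dot (G y) (vsub xs y) by rewrite y_def; vec_ring.
  have -> : dot (vscale th (vsub z1 zk)) (vscale th (vsub z1 zk)) =
            th ^ 2 * dot (vsub z1 zk) (vsub z1 zk) by vec_ring.
  have := gradient_ineq g_grad g_conv y xk; have := gradient_ineq g_grad g_conv y xs.
  nra.
rewrite -(zlin_sub (G y) lam Ai beta resid) -/ell.
have := Rmult_le_compat_l th _ _ ltac:(lra) three_point.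
rewrite /c in three_point *; nra.
Qed.

End BlockStep.

(** * The extrapolation sequence *)

Lemma theta_step t s : 0 < t <= 1 -> s = (- t ^ 2 + sqrt (t ^ 4 + 4 * t ^ 2)) / 2 ->
  [/\ 0 < s <= t, s ^ 2 = t ^ 2 * (1 - s) & s * (2 + t) <= 2 * t].
Proof.
move=> t_range s_def.
have q0 : 0 <= t ^ 4 + 4 * t ^ 2 by nra.
have q_sq := sqrt_sqrt _ q0; have q_ge0 := sqrt_pos (t ^ 4 + 4 * t ^ 2).
move: s_def q_sq q_ge0; set q := sqrt _ => s_def q_sq q_ge0.
have q_gt : t ^ 2 < q.
  by apply: Rnot_le_lt => le; have := Rmult_le_compat _ _ _ _ q_ge0 q_ge0 le le; nra.
have s_sq : s ^ 2 = t ^ 2 * (1 - s) by rewrite s_def; nra.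
have s0 : 0 < s by lra.
split; [nra | exact: s_sq | apply: Rnot_lt_le => lt].
(* [s] is the positive root of [u^2 + t^2 u - t^2], which is nonnegative at [u = 2t/(2+t)] *)
set u := 2 * t / (2 + t).
have u_def : u * (2 + t) = 2 * t by rewrite /u; field; lra.
have fu : u ^ 2 + t ^ 2 * u - t ^ 2 = t ^ 4 / (2 + t) ^ 2 by rewrite /u; field; lra.
have : 0 <= t ^ 4 / (2 + t) ^ 2.
  by apply: Rmult_le_pos; [nra | apply/Rlt_le/Rinv_0_lt_compat; nra].
have : u < s by nra.
nra.
Qed.

Section ThetaSequence.
Variable theta : nat -> R.
Hypotheses (theta0 : theta 0%nat = 1) (thetaS : forall k, theta (S k) =
  (- (theta k) ^ 2 + sqrt ((theta k) ^ 4 + 4 * (theta k) ^ 2)) / 2).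

Lemma theta_range k : 0 < theta k <= 1.
Proof.
elim: k => [|k IH]; first by rewrite theta0; lra.
by case: (theta_step IH (thetaS k)); lra.
Qed.

Lemma theta_next k :
  0 < theta (S k) <= theta k /\ theta (S k) ^ 2 = theta k ^ 2 * (1 - theta (S k)).
Proof. by case: (theta_step (theta_range k) (thetaS k)). Qed.

(* Equivalently [1 / theta k >= (k + 2) / 2]: [1 / theta] grows by at least [1/2] per step. *)
Lemma theta_mul_le k : theta k * (INR k + 2) <= 2.
Proof.
elim: k => [|k IH]; first by rewrite theta0 /=; lra.
have [t_pos _] := theta_range k; have [s_range _ s_le] := theta_step (theta_range k) (thetaS k).
rewrite S_INR; have := pos_INR k.
set t := theta k in IH t_pos s_range s_le *; set s := theta (S k) in s_range s_le *.
move=> k0; apply: (Rmult_le_reg_l t) => //; nra.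
Qed.

End ThetaSequence.

Lemma theta_rate_bound t T P0 a M : 0 < T -> 0 < t -> t * T <= 2 -> 0 <= P0 <= a -> 0 <= M ->
  t ^ 2 * P0 + t * M <= 4 * a / T ^ 2 + 2 * M / T.
Proof.
move=> T0 t0 tT [P00 P0a] M0.
have t_le : t <= 2 / T := Rle_div_of_mul_le tT T0.
have t2_le : t ^ 2 <= (2 / T) ^ 2 by apply: pow_incr; lra.
have := Rmult_le_compat _ _ _ _ (pow2_ge_0 t) P00 t2_le P0a.
have := Rmult_le_compat _ _ _ _ (Rlt_le _ _ t0) M0 t_le (Rle_refl M).
have -> : (2 / T) ^ 2 * a = 4 * a / T ^ 2 by field; lra.
have -> : 2 / T * M = 2 * M / T by field; lra.
lra.
Qed.

Section AcceleratedRecursion.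
Variables (theta Psi P Q : nat -> R) (M : R).
Hypotheses (theta0 : theta 0%nat = 1) (theta_next : forall k,
  0 < theta (S k) <= theta k /\ theta (S k) ^ 2 = theta k ^ 2 * (1 - theta (S k))).
Hypothesis Q_le : forall k, Q k <= M.
Hypothesis Psi_rec : forall k, Psi (S k) <= (1 - theta k) * Psi k
  + theta k ^ 2 * (P k - P (S k)) + theta k * (Q k - Q (S k)).

(* Multiplying the recursion at step [K+1] by [1 - theta (K+1)] turns [theta K ^ 2] into
   [theta (K+1) ^ 2], so the [P]-terms telescope. *)
Lemma accelerated_recursion K :
  Psi (S K) <= theta K ^ 2 * (P 0%nat - P (S K)) + theta K * (M - Q (S K)).
Proof.
elim: K => [|K IH]; first by have := Psi_rec 0; have := Q_le 0; rewrite theta0; nra.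
have rec := Psi_rec (S K); have QM := Q_le (S K); have [[s0 st] s_sq] := theta_next K.
set t := theta K in IH st s_sq *; set s := theta (S K) in rec s0 st s_sq *.
have t0 : 0 < t by lra.
have ts : (1 - s) * t <= s by apply: (Rmult_le_reg_r t) => //; nra.
have s1 : 0 <= 1 - s by nra.
have := Rmult_le_compat_l _ _ _ s1 IH.
have : 0 <= (s - (1 - s) * t) * (M - Q (S K)) by apply: Rmult_le_pos; lra.
have : (1 - s) * (t ^ 2 * (P 0%nat - P (S K))) = s ^ 2 * (P 0%nat - P (S K)).
  by rewrite s_sq; ring.
nra.
Qed.

End AcceleratedRecursion.

(** * Fast PL-ADMM-PS *)

(* For [nA i = 0] the quotient is [0] ([x / 0 = 0] in Rocq); nothing below needs [nA i > 0]. *)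
Definition admm_alpha n (nA eta : 'I_n -> R) : R :=
  \big[Rmin/(1 / (INR n + 1))]_(i < n)
    ((eta i - INR n * (nA i) ^ 2) / (2 * (INR n + 1) * (nA i) ^ 2)).

Section StepSize.
Variables (n : nat) (nA eta : 'I_n -> R).
Hypothesis eta_gt : forall i, INR n * (nA i) ^ 2 < eta i.

Lemma admm_alpha_range : 0 <= admm_alpha nA eta <= 1.
Proof.
have n0 := pos_INR n; split.
  apply: (big_ind (Rle 0)); first by apply: Rlt_le; apply: Rdiv_lt_0_compat; lra.
    by move=> a c a0 c0; apply: Rmin_glb.
  move=> i _; have := eta_gt i; have := pow2_ge_0 (nA i) => a0 eta_i.
  by apply: Rmult_le_pos; [lra | apply: Rinv_ge0; nra].
apply: Rle_trans (bigmin_le_init _ _) _.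
by rewrite /Rdiv Rmult_1_l -Rinv_1; apply: Rinv_le_contravar; lra.
Qed.

Lemma admm_alpha_spec i : INR n * (nA i) ^ 2 <= (1 - admm_alpha nA eta) * eta i.
Proof.
have al_n : admm_alpha nA eta <= 1 / (INR n + 1) := bigmin_le_init _ _.
have al_i : admm_alpha nA eta <= (eta i - INR n * nA i ^ 2) / (2 * (INR n + 1) * nA i ^ 2).
  exact: bigmin_le.
have := admm_alpha_range; have := eta_gt i; have := pow2_ge_0 (nA i); have := pos_INR n.
move: al_n al_i; set alpha := admm_alpha nA eta; set N := INR n; set a := nA i ^ 2.
set e := eta i; clearbody alpha N a e => al_n al_i n0 a0 eta_i [al0 al1].
case: (Rle_lt_or_eq _ _ a0) => [a_gt0 | a_eq0]; last first.
  by rewrite -a_eq0 Rmult_0_r in eta_i *; apply: Rmult_le_pos; lra.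
have den_pos : 0 < 2 * (N + 1) * a by nra.
have al_i' := Rmult_le_of_le_div al_i den_pos.
have al_n' := Rmult_le_of_le_div al_n ltac:(lra).
suff : alpha * e <= e - N * a by lra.
have [e_small | e_large] := Rle_lt_dec e (2 * (N + 1) * a).
  by apply: Rle_trans al_i'; apply: Rmult_le_compat_l.
apply: (Rmult_le_reg_r (N + 1)); first lra.
have : alpha * e * (N + 1) <= e by nra.
nra.
Qed.

End StepSize.

Lemma bnorm_sq n (d : 'I_n -> nat) (u : bvec d) : bnorm u ^ 2 = bdot u u.
Proof. by rewrite /bnorm pow2_sqrt //; apply: sumR_ge0 => i; apply: dot_ge0. Qed.

Lemma diam_ge (T : Type) (nrm : T -> T -> R) (S : T -> Prop) D u v :
  is_diam nrm S D -> S u -> S v -> nrm u v <= D.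
Proof. by case=> ub _ Su Sv; apply: ub; exists u, v. Qed.

Lemma ftot_fin n (d : 'I_n -> nat) (g : forall i, vec (d i) -> R)
  (h : forall i, vec (d i) -> ereal) (v : bvec d) :
  (forall i, exists a, h i (v i) = Fin a) ->
  ftot g h v = Fin (\big[Rplus/0]_(i < n) (g i (v i) + real_of (h i (v i)))).
Proof.
move=> v_fin; rewrite /ftot (eq_bigr (fun i => Fin (g i (v i) + real_of (h i (v i))))).
  by rewrite (big_morph Fin (id1 := Fin 0) (op1 := eadd)).
by move=> i _; have [a a_def] := v_fin i; rewrite /fi a_def.
Qed.

Section FastPLADMM.
(* The families below are indexed by [i], which must stay an explicit argument. *)
Local Unset Implicit Arguments.
Variables (n : nat) (d : 'I_n -> nat) (m : nat).
Variables (g : forall i : 'I_n, vec (d i) -> R) (G : forall i : 'I_n, vec (d i) -> vec (d i))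
  (h : forall i : 'I_n, vec (d i) -> ereal) (L : 'I_n -> R)
  (A : forall i : 'I_n, linmap m (d i)) (nA : 'I_n -> R) (b : vec m)
  (beta : R) (eta : 'I_n -> R).
Hypotheses (g_conv : forall i, convex_r (g i)) (g_grad : forall i, is_gradient (g i) (G i))
  (L_pos : forall i, 0 < L i) (G_lip : forall i, lipschitz_grad (G i) (L i))
  (h_proper : forall i, proper_e (h i)) (h_conv : forall i, convex_e (h i))
  (A_opnorm : forall i, is_opnorm (A i) (nA i)) (beta_pos : 0 < beta)
  (eta_gt : forall i, INR n * (nA i) ^ 2 < eta i).
Variables (x z y : nat -> bvec d) (lam : nat -> vec m) (theta : nat -> R).
Hypotheses (theta0 : theta 0%nat = 1) (thetaS : forall k, theta (S k) =
      (- (theta k) ^ 2 + sqrt ((theta k) ^ 4 + 4 * (theta k) ^ 2)) / 2)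
  (y_def : forall k i, y (S k) i =
      vadd (vscale (1 - theta k) (x k i)) (vscale (theta k) (z k i)))
  (z_min : forall k i u,
      ele (zobj (G i (y (S k) i)) (h i) (lam k) (A i) beta
             (vsub (Aop A (z k)) b) (L i * theta k + beta * eta i) (z k i)
             (z (S k) i))
          (zobj (G i (y (S k) i)) (h i) (lam k) (A i) beta
             (vsub (Aop A (z k)) b) (L i * theta k + beta * eta i) (z k i) u))
  (x_def : forall k i, x (S k) i =
      vadd (vscale (1 - theta k) (x k i)) (vscale (theta k) (z (S k) i)))
  (lam_def : forall k, lam (S k) = vadd (lam k) (vscale beta (vsub (Aop A (z (S k))) b))).
Variables (xs : bvec d) (lams : vec m).
Hypotheses (xs_feas : Aop A xs = b)
  (xs_sub : forall i, subgrad (fi (g i) (h i)) (xs i) (vscale (-1) (ladj (A i) lams))).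

Variables (X : bvec d -> Prop) (DX : R) (Lam : vec m -> Prop) (DL : R).
Hypotheses (xs_X : X xs) (z_X : forall k, X (z k))
  (X_diam : is_diam (fun u v => bnorm (bsub u v)) X DX)
  (lams_Lam : Lam lams) (lam_Lam : forall k, Lam (lam k))
  (Lam_diam : is_diam (fun u v => vnorm (vsub u v)) Lam DL).
Local Set Implicit Arguments.

Definition hs i := real_of (h i (xs i)).

Lemma hs_fin i : h i (xs i) = Fin (hs i).
Proof. by have [a [a_def _]] := xs_sub i; move: a_def; rewrite /fi /hs; case: (h i (xs i)). Qed.

Lemma eta_pos i : 0 < eta i.
Proof. by have := eta_gt i; have := pow2_ge_0 (nA i); have := pos_INR n; nra. Qed.

Lemma iterate_block k i : (theta k < 1 -> exists a, h i (x k i) = Fin a) ->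
  (exists a, h i (x (S k) i) = Fin a) /\
  g i (x (S k) i) + real_of (h i (x (S k) i)) <=
    (1 - theta k) * (g i (x k i) + real_of (h i (x k i))) + theta k * (g i (xs i) + hs i)
    - theta k * dot (vadd (lam k) (vscale beta (vsub (Aop A (z k)) b)))
                    (lapp (A i) (vsub (z (S k) i) (xs i)))
    + theta k * (L i * theta k + beta * eta i) / 2 *
        (dot (vsub (xs i) (z k i)) (vsub (xs i) (z k i))
         - dot (vsub (xs i) (z (S k) i)) (vsub (xs i) (z (S k) i)))
    - theta k * (beta * eta i) / 2 * dot (vsub (z (S k) i) (z k i)) (vsub (z (S k) i) (z k i)).
Proof.
move=> prev_fin; have be0 : 0 <= beta * eta i by have := eta_pos i; nra.
exact: (block_descent (g_conv i) (g_grad i) (G_lip i) (h_proper i) (h_conv i)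
  (theta_range theta0 thetaS k) (Rlt_le _ _ (L_pos i)) be0 prev_fin (hs_fin i)
  (y_def k i) (x_def k i) (z_min k i)).
Qed.

Lemma x_fin k i : exists a, h i (x (S k) i) = Fin a.
Proof.
elim: k i => [|k IH] i; apply: (proj1 (iterate_block _)).
  by rewrite theta0; lra.
by move=> _; apply: IH.
Qed.

Lemma x_fin_prev k i : theta k < 1 -> exists a, h i (x k i) = Fin a.
Proof. by case: k => [|k]; [rewrite theta0; lra | move=> _; apply: x_fin]. Qed.

Definition fval (v : bvec d) := \big[Rplus/0]_(i < n) (g i (v i) + real_of (h i (v i))).
Definition xres k := vsub (Aop A (x k)) b.
Definition zres k := vsub (Aop A (z k)) b.
Definition lam_hat k := vadd (lam k) (vscale beta (zres k)).
Definition zstep k :=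
  \big[Rplus/0]_(i < n) (eta i * dot (vsub (z (S k) i) (z k i)) (vsub (z (S k) i) (z k i))).
Definition distL k :=
  \big[Rplus/0]_(i < n) (L i / 2 * dot (vsub (xs i) (z k i)) (vsub (xs i) (z k i))).
Definition distE k := dot (vsub lams (lam k)) (vsub lams (lam k)).
Definition distR k :=
  \big[Rplus/0]_(i < n) (beta * eta i / 2 * dot (vsub (xs i) (z k i)) (vsub (xs i) (z k i))).
Definition distQ k := distE k / (2 * beta) + distR k.
Definition gap k := fval (x k) - fval xs + dot lams (xres k)
  + beta * admm_alpha nA eta / 2 * dot (xres k) (xres k).

Lemma fval_descent k :
  fval (x (S k)) <= (1 - theta k) * fval (x k) + theta k * fval xs
    - theta k * dot (lam_hat k) (zres (S k)) + theta k ^ 2 * (distL k - distL (S k))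
    + theta k * (distR k - distR (S k)) - theta k * (beta / 2 * zstep k).
Proof.
have sum_lin : \big[Rplus/0]_(i < n) dot (lam_hat k) (lapp (A i) (vsub (z (S k) i) (xs i)))
               = dot (lam_hat k) (zres (S k)).
  by rewrite /zres -xs_feas -Aop_bsub dot_Aop.
apply: Rle_trans (ler_sum (fun i => proj2 (iterate_block (@x_fin_prev k i)))) _.
apply: Req_le; rewrite -sum_lin /fval /distL /distR /zstep /hs /lam_hat /zres.
sum_normalize; apply: eq_bigr => i _; field; lra.
Qed.

Lemma zstep_ge0 k : 0 <= zstep k.
Proof. by apply: sumR_ge0 => i; apply: Rmult_le_pos; [apply/Rlt_le/eta_pos | apply: dot_ge0]. Qed.

Lemma dual_step k :
  dot (vsub lams (lam_hat k)) (zres (S k))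
  + beta * admm_alpha nA eta / 2 * dot (zres (S k)) (zres (S k))
  <= (distE k - distE (S k)) / (2 * beta) + beta / 2 * zstep k.
Proof.
have [al0 al1] := admm_alpha_range eta_gt.
set r := zres (S k); set alpha := admm_alpha nA eta in al0 al1 *.
set w := vsub (Aop A (z (S k))) (Aop A (z k)).
have ww : dot w w <= (1 - alpha) * zstep k.
  rewrite /w -Aop_bsub; apply: Rle_trans (dot_Aop_le _ A_opnorm) _.
  rewrite /zstep sumR_mull; apply: ler_sum => i.
  have := admm_alpha_spec eta_gt i; have := dot_ge0 (vsub (z (S k) i) (z k i)).
  rewrite /bsub -/alpha => D0 /(Rmult_le_compat_r _ _ _ D0); lra.
have young : 2 * dot w r <= zstep k + (1 - alpha) * dot r r.
  exact: young_dot ww ltac:(lra) (zstep_ge0 k).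
(* [lam_hat k = lam (S k) - beta w] *)
have ident : 2 * beta * dot (vsub lams (lam_hat k)) r =
    distE k - distE (S k) - beta ^ 2 * dot r r + 2 * beta ^ 2 * dot w r.
  by rewrite /distE lam_def /lam_hat /r /zres /w; vec_ring.
apply: (Rmult_le_reg_l (2 * beta)); first lra.
have -> : 2 * beta * ((distE k - distE (S k)) / (2 * beta) + beta / 2 * zstep k) =
          distE k - distE (S k) + beta ^ 2 * zstep k by field; lra.
nra.
Qed.

Lemma gap_recursion k :
  gap (S k) <= (1 - theta k) * gap k + theta k ^ 2 * (distL k - distL (S k))
               + theta k * (distQ k - distQ (S k)).
Proof.
have [t0 t1] := theta_range theta0 thetaS k.
have xres_S : xres (S k) = vadd (vscale (1 - theta k) (xres k)) (vscale (theta k) (zres (S k))).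
  by rewrite /xres /zres (Aop_comb A (x_def k)); vec_ext.
have lin : dot lams (xres (S k)) =
    (1 - theta k) * dot lams (xres k) + theta k * dot lams (zres (S k)).
  by rewrite xres_S; vec_ring.
have sq := dot_comb_le (xres k) (zres (S k)) (conj (Rlt_le _ _ t0) t1); rewrite -xres_S in sq.
have [al0 _] := admm_alpha_range eta_gt.
have ba0 : 0 <= beta * admm_alpha nA eta / 2 by nra.
have := Rmult_le_compat_l _ _ _ ba0 sq.
have := Rmult_le_compat_l _ _ _ (Rlt_le _ _ t0) (dual_step k).
have := fval_descent k; rewrite dot_vsubl /gap /distQ lin.
nra.
Qed.

Lemma distL_ge0 k : 0 <= distL k.
Proof.
apply: sumR_ge0 => i; apply: Rmult_le_pos; last exact: dot_ge0.
by have := L_pos i; lra.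
Qed.

Lemma distQ_ge0 k : 0 <= distQ k.
Proof.
apply: Rplus_le_le_0_compat.
  by apply: Rmult_le_pos; [apply: dot_ge0 | apply/Rlt_le/Rinv_0_lt_compat; lra].
apply: sumR_ge0 => i; apply: Rmult_le_pos; last exact: dot_ge0.
by have := eta_pos i; nra.
Qed.

Lemma distQ_le k :
  distQ k <= DL ^ 2 / (2 * beta) + beta * \big[Rmax/0]_(i < n) eta i / 2 * DX ^ 2.
Proof.
apply: Rplus_le_compat.
  apply: Rmult_le_compat_r; first by apply/Rlt_le/Rinv_0_lt_compat; lra.
  rewrite /distE -vnorm_sq; apply: pow_incr; split; first exact: vnorm_ge0.
  exact: diam_ge Lam_diam lams_Lam (lam_Lam k).
apply: (Rle_trans _ (beta * \big[Rmax/0]_(i < n) eta i / 2 * bdot (bsub xs (z k)) (bsub xs (z k)))).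
  rewrite /bdot sumR_mull; apply: ler_sum => i; apply: Rmult_le_compat_r; first exact: dot_ge0.
  by have := bigmax_ge 0 eta i; nra.
apply: Rmult_le_compat_l; first by have := bigmax_ge_init 0 eta; nra.
rewrite -bnorm_sq; apply: pow_incr; split; first exact: sqrt_pos.
exact: diam_ge X_diam xs_X (z_X k).
Qed.

Lemma distL0_le : distL 0 <= \big[Rmax/0]_(i < n) L i / 2 * bnorm (bsub (z 0%nat) xs) ^ 2.
Proof.
rewrite bnorm_sq /bdot sumR_mull; apply: ler_sum => i.
have -> : dot (vsub (z 0%nat i) (xs i)) (vsub (z 0%nat i) (xs i)) =
          dot (vsub (xs i) (z 0%nat i)) (vsub (xs i) (z 0%nat i)) by vec_ring.
apply: Rmult_le_compat_r; first exact: dot_ge0.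
by have := bigmax_ge 0 L i; lra.
Qed.

Lemma fast_pladmm_rate K :
  gap (S K) <= 2 * \big[Rmax/0]_(i < n) L i * bnorm (bsub (z 0%nat) xs) ^ 2 / (INR K + 2) ^ 2
    + 2 * beta * \big[Rmax/0]_(i < n) eta i * DX ^ 2 / (INR K + 2)
    + 2 * DL ^ 2 / (beta * (INR K + 2)).
Proof.
have T0 : 0 < INR K + 2 by have := pos_INR K; lra.
have := theta_rate_bound T0 (proj1 (theta_range theta0 thetaS K)) (theta_mul_le theta0 thetaS K)
  (conj (distL_ge0 0) distL0_le) (Rle_trans _ _ _ (distQ_ge0 0) (distQ_le 0)).
have := accelerated_recursion theta0 (theta_next theta0 thetaS) distQ_le gap_recursion K.
have -> : 4 * (\big[Rmax/0]_(i < n) L i / 2 * bnorm (bsub (z 0%nat) xs) ^ 2) / (INR K + 2) ^ 2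
        = 2 * \big[Rmax/0]_(i < n) L i * bnorm (bsub (z 0%nat) xs) ^ 2 / (INR K + 2) ^ 2.
  by field; lra.
have -> : 2 * (DL ^ 2 / (2 * beta) + beta * \big[Rmax/0]_(i < n) eta i / 2 * DX ^ 2)
            / (INR K + 2)
        = beta * \big[Rmax/0]_(i < n) eta i * DX ^ 2 / (INR K + 2) + DL ^ 2 / (beta * (INR K + 2)).
  by field; lra.
have : 0 <= beta * \big[Rmax/0]_(i < n) eta i * DX ^ 2 / (INR K + 2).
  apply: Rle_mult_inv_pos => //; apply: Rmult_le_pos; last exact: pow2_ge_0.
  by have := bigmax_ge_init 0 eta; nra.
have : 0 <= DL ^ 2 / (beta * (INR K + 2)) by apply: Rle_mult_inv_pos; [apply: pow2_ge_0 | nra].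
have [t0 _] := theta_range theta0 thetaS K.
have := Rmult_le_pos _ _ (pow2_ge_0 (theta K)) (distL_ge0 (S K)).
have := Rmult_le_pos _ _ (Rlt_le _ _ t0) (distQ_ge0 (S K)).
lra.
Qed.

End FastPLADMM.

Theorem theorem2
  (n : nat) (d : 'I_n -> nat) (m : nat)
  (g : forall i : 'I_n, vec (d i) -> R)
  (G : forall i : 'I_n, vec (d i) -> vec (d i))
  (h : forall i : 'I_n, vec (d i) -> ereal)
  (L : 'I_n -> R)
  (A : forall i : 'I_n, linmap m (d i)) (nA : 'I_n -> R) (b : vec m)
  (beta : R) (eta : 'I_n -> R)
  (Hg_conv : forall i, convex_r (g i))
  (Hg_grad : forall i, is_gradient (g i) (G i))
  (HL : forall i, 0 < L i)
  (Hg_lip : forall i, lipschitz_grad (G i) (L i))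
  (Hh : forall i, proper_e (h i) /\ convex_e (h i) /\ lsc_e (h i))
  (HA_nz : forall i, exists r j, A i r j <> 0)
  (HnA : forall i, is_opnorm (A i) (nA i))
  (Hbeta : 0 < beta)
  (Heta : forall i, INR n * (nA i) ^ 2 < eta i)
  (x z y : nat -> bvec d) (lam : nat -> vec m) (theta : nat -> R)
  (Htheta0 : theta 0%nat = 1)
  (Htheta : forall k, theta (S k) =
      (- (theta k) ^ 2 + sqrt ((theta k) ^ 4 + 4 * (theta k) ^ 2)) / 2)
  (Hy : forall k i, y (S k) i =
      vadd (vscale (1 - theta k) (x k i)) (vscale (theta k) (z k i)))
  (Hz : forall k i u,
      ele (zobj (G i (y (S k) i)) (h i) (lam k) (A i) beta
             (vsub (Aop A (z k)) b) (L i * theta k + beta * eta i) (z k i)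
             (z (S k) i))
          (zobj (G i (y (S k) i)) (h i) (lam k) (A i) beta
             (vsub (Aop A (z k)) b) (L i * theta k + beta * eta i) (z k i) u))
  (Hx : forall k i, x (S k) i =
      vadd (vscale (1 - theta k) (x k i)) (vscale (theta k) (z (S k) i)))
  (Hlam : forall k, lam (S k) = vadd (lam k) (vscale beta (vsub (Aop A (z (S k))) b)))
  (xs : bvec d) (lams : vec m)
  (Hsaddle_feas : Aop A xs = b)
  (Hsaddle_sub : forall i,
      subgrad (fi (g i) (h i)) (xs i) (vscale (-1) (ladj (A i) lams)))
  (X : bvec d -> Prop) (DX : R)
  (HXb : bounded_set (@bnorm n d) X)
  (HXs : X xs) (HXz : forall k, X (z k))
  (HDX : is_diam (fun u v => bnorm (bsub u v)) X DX)
  (Lam : vec m -> Prop) (DL : R)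
  (HLb : bounded_set (@vnorm m) Lam)
  (HLs : Lam lams) (HLl : forall k, Lam (lam k))
  (HDL : is_diam (fun u v => vnorm (vsub u v)) Lam DL)
  (K : nat) (HK : (0 < K)%nat) :
  let alpha := \big[Rmin/(1 / (INR n + 1))]_(i < n)
      ((eta i - INR n * (nA i) ^ 2) / (2 * (INR n + 1) * (nA i) ^ 2)) in
  let Lmax := \big[Rmax/0]_(i < n) L i in
  let etamax := \big[Rmax/0]_(i < n) eta i in
  let res := vsub (Aop A (x (S K))) b in
  ele (eadd (ftot g h (x (S K)))
            (Fin (- real_of (ftot g h xs) + dot lams res
                  + beta * alpha / 2 * (vnorm res) ^ 2)))
      (Fin (2 * Lmax * (bnorm (bsub (z 0%nat) xs)) ^ 2 / (INR K + 2) ^ 2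
            + 2 * beta * etamax * DX ^ 2 / (INR K + 2)
            + 2 * DL ^ 2 / (beta * (INR K + 2)))).
Proof.
move=> alpha Lmax etamax res.
have h_proper i : proper_e (h i) := proj1 (Hh i).
have h_conv i : convex_e (h i) := proj1 (proj2 (Hh i)).
have x_fin := x_fin Hg_conv Hg_grad HL Hg_lip h_proper h_conv Hbeta Heta
  Htheta0 Htheta Hy Hz Hx Hsaddle_sub.
have xs_fin i : exists a, h i (xs i) = Fin a by exists (hs h xs i); apply: hs_fin.
have rate := fast_pladmm_rate Hg_conv Hg_grad HL Hg_lip h_proper h_conv HnA Hbeta Heta
  Htheta0 Htheta Hy Hz Hx Hlam Hsaddle_feas Hsaddle_sub HXs HXz HDX HLs HLl HDL K.
rewrite (ftot_fin g (x_fin K)) (ftot_fin g xs_fin) vnorm_sq; cbn [eadd ele real_of].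
rewrite /gap /fval /xres /admm_alpha in rate.
by rewrite /alpha /Lmax /etamax /res; lra.
Qed.
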